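(* Let $G(t,z)$ and $G_n(t)$ be the EGF and row polynomials of the GKP triangle $\left[\begin{array}{cc|c}\alpha,&\beta&\gamma\\ \alpha',&\beta'&\gamma'\end{array}\right]$, and put $\mathcal A(t)=\alpha+\alpha't$, $\mathcal B(t)=(\beta+\beta't)t$, $\mathcal C(t)=\gamma+\gamma't$. (i) $G$ satisfies $[\mathcal A(t)z-1]\,\partial G/\partial z+\mathcal B(t)\,\partial G/\partial t+\mathcal C(t)\,G=0$ with $G(t,0)\equiv1$. (ii) $G_0\equiv1$ and $G_{n+1}(t)=[\mathcal A(t)n+\mathcal C(t)]G_n(t)+\mathcal B(t)G_n'(t)$ for all $n\ge0$. (iii) If $\beta\beta'\neq0$, then with $\hat\alpha=\alpha/\beta$, $\hat\alpha'=-\alpha'/\beta'$, $\hat\gamma=\gamma/\beta$, $\hat\gamma'=-\gamma'/\beta'$ and $D_t=d/dt$, for all $n\ge0$ $$\bigl[t^{1+\hat\alpha}(\beta+\beta't)^{1-\hat\alpha-\hat\alpha'}D_t\bigr]^n\frac{t^{\hat\gamma}}{(\beta+\beta't)^{\hat\gamma+\hat\gamma'}}=\frac{t^{\hat\alpha n+\hat\gamma}\,G_n(t)}{(\beta+\beta't)^{(\hat\alpha+\hat\alpha')n+\hat\gamma+\hat\gamma'}}$$ (as an identity of functions of $t$ on a domain where branches of the powers are fixed consistently).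
   Context: GKP triangle: for complex parameters $\alpha,\beta,\gamma,\alpha',\beta',\gamma'$, the array $T_{n,k}=\left[\begin{array}{cc|c}\alpha,&\beta&\gamma\\ \alpha',&\beta'&\gamma'\end{array}\right]_{n,k}$ ($n,k\in\mathbb Z$) is defined by $T_{0,0}=1$, $T_{n,k}=0$ if $n<0$, $k<0$ or $k>n$, and $T_{n+1,k+1}=[\alpha n+\beta(k+1)+\gamma]\,T_{n,k+1}+[\alpha' n+\beta' k+\gamma']\,T_{n,k}$ for all $n\ge0$ and all integers $k$. Its $n$th row polynomial is $G_n(t)=\sum_{k=0}^n T_{n,k}t^k$ and its EGF is $G(t,z)=\sum_{n\ge0}G_n(t)\,z^n/n!$. *)

From HB Require Import structures.
From mathcomp Require Import all_boot all_order all_algebra.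
From mathcomp Require Import complex.
From mathcomp Require Import all_classical all_reals all_analysis.
Import Order.TTheory GRing.Theory Num.Theory ComplexField.
Import numFieldNormedType.Exports.
Set Implicit Arguments. Unset Strict Implicit. Unset Printing Implicit Defensive.
Local Open Scope ring_scope.

(* The complex numbers, built as R[i] over a real field R : realType,
   viewed as a numFieldType (hence a normed field, so that [derive1]
   is the complex derivative). *)
Definition Cplx (R : realType) : numFieldType := R[i].

Definition cexp (R : realType) (z : Cplx R) : Cplx R :=
  let: Complex x y := (z : R[i]) in Complex (expR x * cos y) (expR x * sin y).

(* Power w^a computed with a fixed branch L of log w:  w^a := exp(a * L). *)
Definition cpow (R : realType) (L : Cplx R -> Cplx R) (a t : Cplx R) : Cplx R :=
  cexp (a * L t).

Definition log_branch (R : realType) (U : set (Cplx R))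
  (L f : Cplx R -> Cplx R) : Prop :=
  forall t, U t -> cexp (L t) = f t /\ derivable L t 1.

(* GKP triangle entries T_{n,k} for k >= 0 (T_{n,k} = 0 for k < 0 is used in
   the recurrence at k+1 = 0).  Entries with k > n vanish automatically. *)
Fixpoint gkpT (K : fieldType) (a b c a' b' c' : K) (n k : nat) : K :=
  match n with
  | 0 => (k == 0%N)%:R
  | m.+1 => (a * m%:R + b * k%:R + c) * gkpT a b c a' b' c' m k
            + (if k is j.+1 then (a' * m%:R + b' * j%:R + c') * gkpT a b c a' b' c' m j
               else 0)
  end.

Definition gkpG (K : fieldType) (a b c a' b' c' : K) (n : nat) : {poly K} :=
  \sum_(k < n.+1) gkpT a b c a' b' c' n k *: 'X^k.

(* Formal power series in z with coefficients in K[t]:  F = sum_n F n z^n. *)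
Definition fps (K : fieldType) := nat -> {poly K}.

Definition gkpEGF (K : fieldType) (a b c a' b' c' : K) : fps K :=
  fun n => (n`!%:R)^-1 *: gkpG a b c a' b' c' n.

Definition fps_dz (K : fieldType) (F : fps K) : fps K := fun n => n.+1%:R *: F n.+1.
Definition fps_dt (K : fieldType) (F : fps K) : fps K := fun n => deriv (F n).
Definition fps_mulz (K : fieldType) (F : fps K) : fps K :=
  fun n => if n is m.+1 then F m else 0.

(* The operator  f |-> t^{1+ah} (beta+beta' t)^{1-ah-ah'} D_t f, with
   branches L1 of log t and L2 of log (beta+beta' t). *)
Definition gkp_op (R : realType) (L1 L2 : Cplx R -> Cplx R) (ah ah' : Cplx R)
  (f : Cplx R -> Cplx R) : Cplx R -> Cplx R :=
  fun t => cpow L1 (1 + ah) t * cpow L2 (1 - ah - ah') t * derive1 f t.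

(* The row polynomials satisfy (ii) because comparing coefficients of t^k in
   (ii) is exactly the defining recurrence of T_{n+1,k}, once one notes that
   t G_n' has coefficients k T_{n,k}; the PDE (i) is (ii) divided by n!.
   For (iii) put F_n(t) = t^{P_n} G_n(t) (beta + beta' t)^{-Q_n} with
   P_n = ah n + gh and Q_n = (ah + ah') n + gh + gh'.  The logarithmic
   derivatives of t and beta + beta' t are 1/t and beta'/(beta + beta' t), so
   the operator maps F_n to t^{P_{n+1}} (beta + beta' t)^{-Q_{n+1}} times the
   right-hand side of (ii), i.e. to F_{n+1}; as the operator only depends on
   its argument near t, induction on n applies on the open set U.  The only
   analytic input is that the complex exponential is its own derivative,
   which follows from the first-order expansions of expR, cos and sin at 0. *)

From HB Require Import structures.
From mathcomp Require Import all_boot all_order all_algebra.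
From mathcomp Require Import complex.
From mathcomp Require Import all_classical all_reals all_analysis.
From mathcomp Require Import ring lra.
Import Order.TTheory GRing.Theory Num.Theory ComplexField.
Import numFieldNormedType.Exports.
Local Open Scope classical_set_scope.
Local Open Scope complex_scope.
Local Open Scope ring_scope.

Lemma coefX_deriv (K : nzRingType) (p : {poly K}) k :
  ('X * p^`())`_k = p`_k *+ k.
Proof. by rewrite coefXM; case: k => [|k]; rewrite ?mulr0n // coef_deriv. Qed.

Section RowPolynomials.
Variables (K : fieldType) (a b c a' b' c' : K).
Local Notation T := (gkpT a b c a' b' c').
Local Notation G := (gkpG a b c a' b' c').

Lemma gkpT_gt n k : (n < k)%N -> T n k = 0.
Proof.
elim: n k => [|n IHn] [|k] //= ltnk.
by rewrite !IHn ?(ltnW ltnk) // !mulr0 addr0.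
Qed.

Lemma coef_gkpG n k : (G n)`_k = T n k.
Proof.
rewrite /gkpG -poly_def coef_poly.
by case: ltnP => // /gkpT_gt ->.
Qed.

Lemma gkpG0 : G 0 = 1.
Proof. by apply/polyP => -[|k]; rewrite coef_gkpG coefC. Qed.

Lemma gkpGS n :
  G n.+1 = ((a%:P + a'%:P * 'X) * n%:R%:P + (c%:P + c'%:P * 'X)) * G n
           + ((b%:P + b'%:P * 'X) * 'X) * (G n)^`().
Proof.
have -> : ((a%:P + a'%:P * 'X) * n%:R%:P + (c%:P + c'%:P * 'X)) * G n
           + ((b%:P + b'%:P * 'X) * 'X) * (G n)^`()
   = (a * n%:R + c)%:P * G n + (a' * n%:R + c')%:P * ('X * G n)
     + b%:P * ('X * (G n)^`()) + b'%:P * ('X * ('X * (G n)^`())).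
  rewrite !polyCD !polyCM; ring.
apply/polyP => k.
rewrite !coefD !coefCM coefX_deriv (coefXM ('X * _)) coefXM !coef_gkpG.
case: k => [|k]; first by rewrite /= !mulr0 !addr0.
rewrite coefX_deriv coef_gkpG /=.
ring.
Qed.
End RowPolynomials.

Section ExponentialGeneratingFunction.
Variables (K : numFieldType) (a b c a' b' c' : K).
Local Notation G := (gkpG a b c a' b' c').
Local Notation E := (gkpEGF a b c a' b' c').

Lemma gkpEGF0 : E 0 = 1.
Proof. by rewrite /gkpEGF gkpG0 invr1 scale1r. Qed.

Lemma fps_dz_gkpEGF n : fps_dz E n = (n`!%:R)^-1 *: G n.+1.
Proof.
rewrite /fps_dz /gkpEGF scalerA factS natrM invfM mulrA divff ?mul1r // pnatr_eq0.
Qed.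

Lemma fps_mulz_dz_gkpEGF n : fps_mulz (fps_dz E) n = (n`!%:R)^-1 *: (n%:R *: G n).
Proof.
case: n => [|n]; first by rewrite scale0r scaler0.
by rewrite /fps_mulz fps_dz_gkpEGF scalerA factS natrM invfM mulrAC mulVf ?mul1r ?pnatr_eq0.
Qed.

Lemma gkpEGF_pde n :
  (a%:P + a'%:P * 'X) * fps_mulz (fps_dz E) n - fps_dz E n
  + ((b%:P + b'%:P * 'X) * 'X) * fps_dt E n + (c%:P + c'%:P * 'X) * E n = 0.
Proof.
rewrite fps_mulz_dz_gkpEGF fps_dz_gkpEGF /fps_dt /gkpEGF derivZ gkpGS -!mul_polyC.
ring.
Qed.

End ExponentialGeneratingFunction.

Lemma is_derive0_expansion {K : numFieldType} {f : K -> K} {l : K} :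
  is_derive (0 : K) (1 : K) f l -> forall e : K, 0 < e -> exists2 d : K, 0 < d &
    forall u, `|u| < d -> `|f u - f 0 - u * l| <= e * `|u|.
Proof.
move=> [df <-] e e0.
have /cvgrPdist_le/(_ e e0) := cvg_toP df erefl.
rewrite near_withinE => /nbhs_normP[d d0 near_d].
exists d => // u ud.
have [->|u0] := eqVneq u 0; first by rewrite normr0 mulr0 mul0r subr0 subrr normr0.
have := near_d u; rewrite /= sub0r normrN => /(_ ud u0).
rewrite /= scaler1 addr0 => quot_le.
have -> : f u - f 0 - u * 'D_1 f 0 = - u * ('D_1 f 0 - u^-1 *: (f u - f 0)).
  by rewrite /GRing.scale /=; field.
by rewrite normrM normrN mulrC ler_wpM2r.
Qed.

Lemma normr_le_sqrt_sqrD {R : rcfType} (x y : R) : `|x| <= Num.sqrt (x ^+ 2 + y ^+ 2).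
Proof. by rewrite -sqrtr_sqr; apply: ler_wsqrtr; rewrite lerDl sqr_ge0. Qed.

Lemma sqrt_sqrD_le_normD {R : rcfType} (x y : R) :
  Num.sqrt (x ^+ 2 + y ^+ 2) <= `|x| + `|y|.
Proof.
rewrite -(ger0_norm (addr_ge0 (normr_ge0 x) (normr_ge0 y))) -sqrtr_sqr.
apply: ler_wsqrtr; rewrite -[x ^+ 2]real_normK ?num_real // -[y ^+ 2]real_normK ?num_real //.
have := normr_ge0 x; have := normr_ge0 y; nra.
Qed.

Section DerivativesInNumField.
Context {K : numFieldType}.

Lemma is_derive1_comp_num {f g : K -> K} {x df dg : K} :
  is_derive x 1 f df -> is_derive (f x) 1 g dg -> is_derive x 1 (g \o f) (dg * df).
Proof.
move=> [/derivable1_diffP fx <-] [/derivable1_diffP gfx <-].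
have gf := differentiable_comp fx gfx.
apply: DeriveDef; first exact/derivable1_diffP.
rewrite -!derive1E (derive1E' gf) diff_comp // (derive1E' fx) (derive1E' gfx) /=.
by rewrite -[X in 'd _ _ X = _]mulr1 [LHS]linearZ mulrC.
Qed.

Lemma is_derive_poly_num (p : {poly K}) (x : K) : is_derive x 1 (horner p) p^`().[x].
Proof.
elim/poly_ind: p => [|p c IHp].
  have -> : horner (0 : {poly K}) = cst 0 by apply/funext => s; rewrite horner0.
  by rewrite deriv0 horner0; exact: is_derive_cst.
have -> : horner (p * 'X + c%:P) = horner p * id + cst c.
  by apply/funext => s; rewrite !hornerE.
apply: is_derive_eq.
by rewrite derivD derivM derivX derivC !hornerE /GRing.scale /=; ring.
Qed.

End DerivativesInNumField.

Section ComplexAnalysis.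
Variable R : realType.
Local Notation C := (Cplx R).

Lemma expR_cos_sin_expansion (e : R) : 0 < e -> exists2 d : R, 0 < d &
  forall u v : R, `|u| < d -> `|v| < d ->
    `|expR u * cos v - 1 - u| + `|expR u * sin v - v| <= e * (`|u| + `|v|).
Proof.
(* With k = min (e/8) 1 the bounds below give an error of k|u| + 7k|v|. *)
move=> e0; pose k := Num.min (e / 8) 1.
have k0 : 0 < k by rewrite lt_min ltr01 andbT divr_gt0.
have k1 : k <= 1 by rewrite ge_min lexx orbT.
have ke : 8 * k <= e.
  have : k <= e / 8 by rewrite ge_min lexx.
  lra.
have [d1 d10 Hexp] := is_derive0_expansion (is_derive_expR 0) _ k0.
have [d2 d20 Hcos] := is_derive0_expansion (is_derive_cos 0) _ k0.
have [d3 d30 Hsin] := is_derive0_expansion (is_derive_sin 0) _ k0.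
exists (Num.min (Num.min d1 d2) (Num.min d3 (Num.min 1 (k / 2)))).
  by rewrite !lt_min d10 d20 d30 ltr01 divr_gt0.
move=> u v; rewrite !lt_min => /and3P[/andP[ud1 _] _ /andP[u1 uk]] /and3P[/andP[_ vd2] vd3 _].
have := Hexp u ud1; rewrite expR0 mulr1 => Eu.
have := Hcos v vd2; rewrite sin0 oppr0 mulr0 subr0 cos0 => Cv.
have := Hsin v vd3; rewrite sin0 cos0 subr0 mulr1 => Sv.
set x := expR u in Eu *.
have nu := normr_ge0 u; have nv := normr_ge0 v.
have x3 : `|x| <= 3.
  have -> : x = (x - 1 - u) + 1 + u by ring.
  apply: le_trans (ler_normD _ _) _; apply: le_trans (lerD (ler_normD _ _) (lexx _)) _.
  rewrite normr1; nra.
have x1 : `|x - 1| <= k.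
  have -> : x - 1 = (x - 1 - u) + u by ring.
  apply: le_trans (ler_normD _ _) _; nra.
have ReE : `|x * cos v - 1 - u| <= 3 * (k * `|v|) + k * `|u|.
  have -> : x * cos v - 1 - u = x * (cos v - 1) + (x - 1 - u) by ring.
  apply: (le_trans (ler_normD _ _)); rewrite normrM.
  by apply: lerD => //; apply: ler_pM.
have ImE : `|x * sin v - v| <= 3 * (k * `|v|) + k * `|v|.
  have -> : x * sin v - v = x * (sin v - v) + (x - 1) * v by ring.
  apply: (le_trans (ler_normD _ _)); rewrite !normrM.
  by apply: lerD; apply: ler_pM.
nra.
Qed.

Local Notation cexp := (@cexp R).

Lemma cexp_sub1_quotient : (fun h : C => h^-1 * (cexp h - 1)) @ 0^' --> (1 : C).
Proof.
apply/cvgrPdist_le => eps; rewrite ltcE => /andP[/eqP Im_eps Re_eps].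
have epsE : eps = (complex.Re eps)%:C by case: (eps) Im_eps => ? ? /= ->.
have [d d0 Hd] := expR_cos_sin_expansion _ (divr_gt0 Re_eps (ltr0Sn _ 1)).
rewrite near_withinE; apply/nbhs_normP; exists (d%:C : C) => /=; first by rewrite ltcR.
move=> h; rewrite /= sub0r normrN => hd h0.
have -> : 1 - h^-1 * (cexp h - 1) = - h^-1 * (cexp h - 1 - h) by field.
rewrite normrM normrN normfV ler_pdivrMl ?normr_gt0 //.
case: h hd h0 => u v; rewrite !normc_def /= ltcR => hd _.
rewrite {1}epsE -rmorphM /= lecR subr0.
set s := Num.sqrt _ in hd *.
have us : `|u| <= s := normr_le_sqrt_sqrD u v.
have vs : `|v| <= s by rewrite /s addrC; exact: normr_le_sqrt_sqrD.
apply: le_trans (sqrt_sqrD_le_normD _ _) _.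
apply: le_trans (Hd u v (le_lt_trans us hd) (le_lt_trans vs hd)) _.
have := normr_ge0 u; have := normr_ge0 v; nra.
Qed.

Lemma cexpD (x y : C) : cexp (x + y) = cexp x * cexp y.
Proof.
case: x y => [x1 x2] [y1 y2]; rewrite /cexp /= expRD cosD sinD.
by apply/eqP; rewrite eq_complex /=; apply/andP; split; apply/eqP; ring.
Qed.

Lemma cexp0 : cexp 0 = 1.
Proof. by rewrite /cexp /= expR0 cos0 sin0 mulr1 mulr0. Qed.

Lemma cexp_neq0 (x : C) : cexp x != 0.
Proof.
apply/negP => /eqP cx0; have := cexpD x (- x).
by rewrite subrr cexp0 cx0 mul0r => /eqP; rewrite oner_eq0.
Qed.

Lemma cexpN (x : C) : cexp (- x) = (cexp x)^-1.
Proof.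
apply: (mulfI (cexp_neq0 x)).
by rewrite -cexpD subrr cexp0 divff // cexp_neq0.
Qed.

Lemma is_derive_cexp (z : C) : is_derive z 1 cexp (cexp z).
Proof.
have quotE : (fun h : C => h^-1 *: ((cexp \o shift z) (h *: 1) - cexp z))
    = (fun h => cexp z * (h^-1 * (cexp h - 1))).
  by apply/funext => h /=; rewrite /GRing.scale /= mulr1 cexpD; ring.
have lim : (fun h : C => h^-1 *: ((cexp \o shift z) (h *: 1) - cexp z)) @ 0^' --> cexp z.
  rewrite quotE -[X in _ --> X]mulr1.
  by apply: cvgM; [exact: cvg_cst | exact: cexp_sub1_quotient].
by apply: DeriveDef; [exact: cvgP lim | exact: cvg_lim lim].
Qed.

Lemma cpowD (L : C -> C) (a1 a2 t : C) :
  cpow L (a1 + a2) t = cpow L a1 t * cpow L a2 t.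
Proof. by rewrite /cpow mulrDl cexpD. Qed.

Lemma cpowN (L : C -> C) (a t : C) : cpow L (- a) t = (cpow L a t)^-1.
Proof. by rewrite /cpow mulNr cexpN. Qed.

Lemma is_derive_cpow {L : C -> C} (a : C) {t dL : C} :
  is_derive t 1 L dL -> is_derive t 1 (cpow L a) (cpow L a t * (a * dL)).
Proof. by move=> L_dL; exact: is_derive1_comp_num (is_deriveZ a L_dL) (is_derive_cexp _). Qed.

Section LogBranch.
Context {U : set C} {L f : C -> C}.
Hypotheses (oU : open U) (Lf : log_branch U L f).

Lemma log_branch_cpow1 {t : C} : U t -> cpow L 1 t = f t.
Proof. by move=> Ut; rewrite /cpow mul1r (Lf _ Ut).1. Qed.

Lemma log_branch_neq0 {t : C} : U t -> f t != 0.
Proof. by move=> Ut; rewrite -(Lf _ Ut).1 cexp_neq0. Qed.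

Lemma log_branch_derive {t df : C} : U t -> is_derive t 1 f df -> 'D_1 L t = df / f t.
Proof.
move=> Ut [_ <-]; have [expL dL] := Lf _ Ut.
have near_f : \forall s \near t, (cexp \o L) s = f s.
  by near=> s; apply: (Lf s _).1; near: s; apply: open_nbhs_nbhs.
have := is_derive1_comp_num (derivableP dL) (is_derive_cexp (L t)).
move=> /(near_eq_is_derive near_f) [_ ->].
by rewrite expL mulrAC divff ?mul1r // log_branch_neq0.
Unshelve. all: by end_near.
Qed.

End LogBranch.

Lemma gkp_op_eq_on {U : set C} {L1 L2 : C -> C} {ah ah' : C} {f g : C -> C} {t : C} :
  open U -> (forall s, U s -> f s = g s) -> U t ->
  gkp_op L1 L2 ah ah' f t = gkp_op L1 L2 ah ah' g t.
Proof.
move=> oU fg Ut; rewrite /gkp_op !derive1E (@near_eq_derive _ _ _ f g) //.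
by near=> s; apply: fg; near: s; apply: open_nbhs_nbhs.
Unshelve. all: by end_near.
Qed.

Section ClosedForm.
Variables (a b c a' b' c' : C) (U : set C) (L1 L2 : C -> C).
Hypotheses (b0 : b != 0) (b'0 : b' != 0) (oU : open U).
Hypotheses (L1_log : log_branch U L1 id) (L2_log : log_branch U L2 (fun t => b + b' * t)).
Local Notation ah := (a / b).
Local Notation ah' := (- (a' / b')).
Local Notation gh := (c / b).
Local Notation gh' := (- (c' / b')).
Local Notation Gn := (gkpG a b c a' b' c').
Local Notation P n := (ah * n%:R + gh).
Local Notation Q n := ((ah + ah') * n%:R + gh + gh').

Definition gkp_closed_form (n : nat) (s : C) : C :=
  cpow L1 (P n) s * (Gn n).[s] * cpow L2 (- Q n) s.

Lemma gkp_op_closed_form n t : U t ->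
  gkp_op L1 L2 ah ah' (gkp_closed_form n) t = gkp_closed_form n.+1 t.
Proof.
move=> Ut; have [_ dL1] := L1_log t Ut; have [_ dL2] := L2_log t Ut.
have lin_deriv : is_derive t 1 (fun s => b + b' * s) b'.
  have := is_deriveD (is_derive_cst b t 1) (is_deriveZ b' (is_derive_id t 1)).
  by rewrite add0r /GRing.scale /= mulr1.
have := is_deriveM (is_deriveM (is_derive_cpow (P n) (derivableP dL1))
  (is_derive_poly_num (Gn n) t)) (is_derive_cpow (- Q n) (derivableP dL2)).
move=> [_ D_closed_form].
have -> : gkp_closed_form n = cpow L1 (P n) * horner (Gn n) * cpow L2 (- Q n) by [].
rewrite /gkp_op derive1E D_closed_form.
rewrite (log_branch_derive oU L1_log Ut (is_derive_id t 1)).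
rewrite (log_branch_derive oU L2_log Ut lin_deriv).
have -> : 1 - ah - ah' = 1 + - (ah + ah') by ring.
rewrite /gkp_closed_form.
have -> : P n.+1 = P n + ah by rewrite mulrSr; ring.
have -> : - Q n.+1 = - Q n + - (ah + ah') by rewrite mulrSr; ring.
rewrite (cpowD L1 1) (cpowD L2 1) (cpowD L1 (P n)) (cpowD L2 (- Q n)).
rewrite (log_branch_cpow1 L1_log Ut) (log_branch_cpow1 L2_log Ut).
rewrite gkpGS !(hornerD, hornerM, hornerC, hornerX) !fctE /GRing.scale /=.
have t0 := log_branch_neq0 L1_log Ut; have bt0 := log_branch_neq0 L2_log Ut.
by field; rewrite /= in t0 bt0; rewrite t0 bt0 b0 b'0.
Qed.

Lemma iter_gkp_op n t : U t ->
  iter n (gkp_op L1 L2 ah ah') (fun s => cpow L1 gh s / cpow L2 (gh + gh') s) t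
  = cpow L1 (P n) t * (Gn n).[t] / cpow L2 (Q n) t.
Proof.
have -> : (fun s => cpow L1 gh s / cpow L2 (gh + gh') s) = gkp_closed_form 0.
  by apply/funext => s; rewrite /gkp_closed_form gkpG0 hornerC mulr1 !mulr0 !add0r cpowN.
rewrite -cpowN; elim: n t => [|n IHn] t Ut //.
by rewrite iterS (gkp_op_eq_on oU IHn Ut) gkp_op_closed_form.
Qed.

End ClosedForm.

End ComplexAnalysis.

Theorem mainTheorem2 (R : realType) (a b c a' b' c' : Cplx R) :
  let G := gkpEGF a b c a' b' c' in
  let Gn := gkpG a b c a' b' c' in
  let A : {poly Cplx R} := a%:P + a'%:P * 'X in
  let B : {poly Cplx R} := (b%:P + b'%:P * 'X) * 'X in
  let Cp : {poly Cplx R} := c%:P + c'%:P * 'X in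
  (* (i) [A z - 1] dG/dz + B dG/dt + C G = 0, and G(t,0) = 1 *)
  ((forall n, A * fps_mulz (fps_dz G) n - fps_dz G n
              + B * fps_dt G n + Cp * G n = 0)
   /\ G 0%N = 1)
  (* (ii) *)
  /\ (Gn 0%N = 1 /\
      forall n : nat, Gn n.+1 = (A * n%:R%:P + Cp) * Gn n + B * deriv (Gn n))
  (* (iii) *)
  /\ (b != 0 -> b' != 0 ->
      let ah := a / b in
      let ah' := - (a' / b') in
      let gh := c / b in
      let gh' := - (c' / b') in
      forall (U : set (Cplx R)) (L1 L2 : Cplx R -> Cplx R),
        open U ->
        log_branch U L1 id ->
        log_branch U L2 (fun t => b + b' * t) ->
        forall (n : nat) (t : Cplx R), U t ->
          iter n (gkp_op L1 L2 ah ah')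
               (fun s => cpow L1 gh s / cpow L2 (gh + gh') s) t
          = cpow L1 (ah * n%:R + gh) t * (Gn n).[t]
            / cpow L2 ((ah + ah') * n%:R + gh + gh') t).
Proof.
move=> G Gn A B Cp; split; [split|split; [split|]].
- exact: gkpEGF_pde.
- exact: gkpEGF0.
- exact: gkpG0.
- exact: gkpGS.
- move=> b0 b'0 ah ah' gh gh' U L1 L2 oU L1_log L2_log n t.
  exact: iter_gkp_op.
Qed.
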